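(* Let $R=\mathbb{Z}_4+u\mathbb{Z}_4$ with $u^2=0$, and let $C=\langle a(x)+ub(x)\rangle$ be the $(1+2u)$-constacyclic code of length $n$ over $R$ given by the ideal of $R[x]/\langle x^n-(1+2u)\rangle$ generated by $a(x)+ub(x)$, where $a(x),b(x)\in\mathbb{Z}_4[x]$ have degree $<n$. Let $\phi:R^n\to\mathbb{Z}_4^{2n}$ be the Gray map $\phi(c_0,\dots,c_{n-1})=(b_0,\dots,b_{n-1},2a_0+b_0,\dots,2a_{n-1}+b_{n-1})$ with $c_i=a_i+ub_i$. Then $\phi(C)$ is a cyclic code over $\mathbb{Z}_4$ of length $2n$, namely the ideal of $\mathbb{Z}_4[x]/\langle x^{2n}-1\rangle$ generated by the polynomials $b(x)+x^n(2a(x)+b(x))$ and $a(x)+x^na(x)$.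
   Context: Vectors $(c_0,\dots,c_{m-1})$ are identified with polynomials $\sum_i c_ix^i$; thus codes of length $n$ over $R$ are subsets of $R[x]/\langle x^n-(1+2u)\rangle$ and codes of length $2n$ over $\mathbb{Z}_4$ are subsets of $\mathbb{Z}_4[x]/\langle x^{2n}-1\rangle$, where cyclic codes are exactly ideals. *)

From HB Require Import structures.
From mathcomp Require Import all_boot all_order all_algebra.
From mathcomp Require Import ring.
Set Implicit Arguments. Unset Strict Implicit. Unset Printing Implicit Defensive.
Import GRing.Theory.
Local Open Scope ring_scope.

(* The ring R = Z_4 + u Z_4 with u^2 = 0.  An element (a, b) stands for a + u b. *)
Definition R4 : Type := ('Z_4 * 'Z_4)%type.
HB.instance Definition _ := GRing.Zmodule.on R4.

Definition R4one : R4 := (1, 0).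
Definition R4mul (x y : R4) : R4 := (x.1 * y.1, x.1 * y.2 + x.2 * y.1).

Lemma R4mulA : associative R4mul.
Proof. case=> [a1 b1] [a2 b2] [a3 b3]; rewrite /R4mul /=; apply: injective_projections => /=; ring. Qed.
Lemma R4mulC : commutative R4mul.
Proof. case=> [a1 b1] [a2 b2]; rewrite /R4mul /=; apply: injective_projections => /=; ring. Qed.
Lemma R4mul1 : left_id R4one R4mul.
Proof. case=> [a b]; rewrite /R4mul /R4one /=; apply: injective_projections => /=; ring. Qed.
Lemma R4mulDl : left_distributive R4mul +%R.
Proof.
case=> [a1 b1] [a2 b2] [a3 b3]; rewrite /R4mul /=.
by apply: injective_projections => /=; ring.
Qed.
Lemma R4one_neq0 : R4one != 0.
Proof. by []. Qed.

HB.instance Definition _ :=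
  GRing.Zmodule_isComNzRing.Build R4 R4mulA R4mulC R4mul1 R4mulDl R4one_neq0.

Definition iotaR (x : 'Z_4) : R4 := (x, 0).
Definition uR : R4 := (0, 1).

(* The ideal <a(x) + u b(x)> of R[x]/<x^n - (1+2u)>, as the set of reduced
   representatives (polynomials of degree < n, i.e. vectors in R^n). *)
Definition constamod (n : nat) : {poly R4} := 'X^n - (1 + 2%:R * uR)%:P.

Definition constacode (n : nat) (a b : {poly 'Z_4}) : {poly R4} -> Prop :=
  fun c => exists f : {poly R4},
     c = Pdiv.Ring.rmodp (f * (map_poly iotaR a + uR%:P * map_poly iotaR b))
                         (constamod n).

Definition gray (n : nat) (c : {poly R4}) : {poly 'Z_4} :=
  \poly_(i < n) (c`_i).2 + 'X^n * \poly_(i < n) (2%:R * (c`_i).1 + (c`_i).2).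

Definition cycideal2 (n : nat) (g1 g2 : {poly 'Z_4}) : {poly 'Z_4} -> Prop :=
  fun v => exists f1 f2 : {poly 'Z_4},
     v = Pdiv.Ring.rmodp (f1 * g1 + f2 * g2) ('X^(2 * n) - 1).

(* Write elements of R[x] as p + u q with p, q in Z_4[x], and let
   psi (p + u q) = q + x^n (2p + q), which is Z_4-linear and agrees with the Gray
   map on polynomials of degree < n.  A direct computation gives
     psi ((f1 + u f2)(a + u b)) = f1 (b + x^n (2a + b)) + f2 (a + x^n a),
     psi ((q1 + u q2)(x^n - 1 - 2u)) = (2 q1 + q2)(x^{2n} - 1),
   the second one using 4 = 0 in Z_4.  Hence psi sends the ideal generated by the
   modulus x^n - (1 + 2u) into the ideal generated by x^{2n} - 1, and the Gray image
   of the reduced representative of f (a + u b) is the reduced representative of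
   f1 (b + x^n (2a + b)) + f2 (a + x^n a); as f1 and f2 range independently over
   Z_4[x], this is exactly the two-generator cyclic code. *)

From HB Require Import structures.
From mathcomp Require Import all_boot all_order all_algebra.
From mathcomp Require Import ring.
Import GRing.Theory.
Local Open Scope ring_scope.

Lemma iotaR_is_zmod_morphism : zmod_morphism iotaR.
Proof. by move=> x y; apply: injective_projections => //=; rewrite subr0. Qed.
HB.instance Definition _ :=
  GRing.isZmodMorphism.Build _ _ iotaR iotaR_is_zmod_morphism.

Lemma iotaR_is_monoid_morphism : monoid_morphism iotaR.
Proof. by split=> // x y; apply: injective_projections => /=; ring. Qed.
HB.instance Definition _ :=
  GRing.isMonoidMorphism.Build _ _ iotaR iotaR_is_monoid_morphism.

Lemma mul_uR_uR : uR * uR = 0.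
Proof. exact/eqP. Qed.

Lemma natr4_Z4 : 4%:R = 0 :> {poly 'Z_4}.
Proof. by rewrite -polyC_natr (_ : 4%:R = 0 :> 'Z_4) ?polyC0 //; apply/eqP. Qed.


Definition upoly (p q : {poly 'Z_4}) : {poly R4} :=
  map_poly iotaR p + uR%:P * map_poly iotaR q.

Definition poly_fst (c : {poly R4}) : {poly 'Z_4} := map_poly (fun x : R4 => x.1) c.
Definition poly_snd (c : {poly R4}) : {poly 'Z_4} := map_poly (fun x : R4 => x.2) c.

Lemma coef_upoly p q i : (upoly p q)`_i = (p`_i, q`_i).
Proof.
rewrite coefD coefCM !coef_map /=.
by apply: injective_projections => /=; ring.
Qed.

Lemma poly_fst_upoly p q : poly_fst (upoly p q) = p.
Proof. by apply/polyP => i; rewrite coef_map_id0 // coef_upoly. Qed.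

Lemma poly_snd_upoly p q : poly_snd (upoly p q) = q.
Proof. by apply/polyP => i; rewrite coef_map_id0 // coef_upoly. Qed.

Lemma upoly_fst_snd (c : {poly R4}) : upoly (poly_fst c) (poly_snd c) = c.
Proof.
apply/polyP => i; rewrite coef_upoly !coef_map_id0 //.
by rewrite -surjective_pairing.
Qed.

Lemma upoly_inj p q p' q' : upoly p q = upoly p' q' -> p = p' /\ q = q'.
Proof.
move=> e; split; first by rewrite -(poly_fst_upoly p q) e poly_fst_upoly.
by rewrite -(poly_snd_upoly p q) e poly_snd_upoly.
Qed.

Lemma upolyB p q p' q' : upoly p q - upoly p' q' = upoly (p - p') (q - q').
Proof. by rewrite /upoly !rmorphB /=; ring. Qed.

Lemma upolyM p q p' q' :
  upoly p q * upoly p' q' = upoly (p * p') (p * q' + q * p').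
Proof.
rewrite /upoly !rmorphD !rmorphM /=.
have uu : uR%:P * uR%:P = 0 :> {poly R4} by rewrite -polyCM mul_uR_uR.
set U := uR%:P; set A := map_poly iotaR p; set B := map_poly iotaR q.
set A' := map_poly iotaR p'; set B' := map_poly iotaR q'.
transitivity (A * A' + U * (A * B' + B * A') + (U * U) * (B * B')); first by ring.
by rewrite uu mul0r addr0.
Qed.

Lemma constamodE n : constamod n = upoly ('X^n - 1) (- 2%:R).
Proof.
rewrite /constamod /upoly rmorphB rmorphN rmorph_nat /= map_polyXn rmorph1.
by rewrite polyCD polyCM polyC1 polyC_natr; ring.
Qed.


Section GrayPolynomial.

Variable n : nat.

Definition gray_upoly (p q : {poly 'Z_4}) : {poly 'Z_4} :=
  q + 'X^n * (2%:R * p + q).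

Lemma gray_upolyB p q p' q' :
  gray_upoly (p - p') (q - q') = gray_upoly p q - gray_upoly p' q'.
Proof. by rewrite /gray_upoly; ring. Qed.

Lemma gray_upoly_mul_generator f1 f2 a b :
  gray_upoly (f1 * a) (f1 * b + f2 * a)
  = f1 * (b + 'X^n * (2%:R *: a + b)) + f2 * (a + 'X^n * a).
Proof. by rewrite /gray_upoly -mul_polyC polyC_natr; ring. Qed.

Lemma gray_upoly_mul_constamod q1 q2 :
  gray_upoly (q1 * ('X^n - 1)) (q1 * - 2%:R + q2 * ('X^n - 1))
  = (2%:R * q1 + q2) * ('X^(2 * n) - 1).
Proof.
rewrite mul2n -addnn exprD /gray_upoly.
transitivity ((2%:R * q1 + q2) * ('X^n * 'X^n - 1) - 4%:R * (q1 * 'X^n)).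
  by ring.
by rewrite natr4_Z4 mul0r subr0.
Qed.

Lemma gray_small (c : {poly R4}) : (size c <= n)%N ->
  gray n c = gray_upoly (poly_fst c) (poly_snd c).
Proof.
move=> hc; rewrite /gray /gray_upoly; congr (_ + 'X^n * _); apply/polyP => i;
  rewrite ?coefD ?coefCM -?polyC_natr ?coefCM coef_poly !coef_map_id0 //;
  case: ltnP => // hi; rewrite nth_default ?(leq_trans hc) //; ring.
Qed.

Lemma size_gray (c : {poly R4}) : (size (gray n c) <= 2 * n)%N.
Proof.
rewrite /gray mul2n -addnn; apply: leq_trans (size_polyD _ _) _.
rewrite geq_max (leq_trans (size_poly _ _) (leq_addr _ _)) /=.
apply: leq_trans (size_polyMleq _ _) _.
by rewrite size_polyXn addSn leq_add2l size_poly.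
Qed.

End GrayPolynomial.

Lemma rmodp_small_sub_mul (R : nzRingType) (d h k : {poly R}) :
  d \is monic -> (size (h - k * d)%R < size d)%N -> Pdiv.Ring.rmodp h d = h - k * d.
Proof.
move=> monic_d small.
by rewrite -[h in LHS](subrK (k * d)) addrC Pdiv.RingMonic.rmodp_addl_mul_small.
Qed.

Lemma gray_rmodp n (a b : {poly 'Z_4}) (f : {poly R4}) : (0 < n)%N ->
  gray n (Pdiv.Ring.rmodp (f * upoly a b) (constamod n))
  = Pdiv.Ring.rmodp (poly_fst f * (b + 'X^n * (2%:R *: a + b))
                     + poly_snd f * (a + 'X^n * a)) ('X^(2 * n) - 1).
Proof.
move=> n_gt0; have n2_gt0 : (0 < 2 * n)%N by rewrite muln_gt0.
have monic_constamod : constamod n \is monic by exact: monicXnsubC.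
set c := Pdiv.Ring.rmodp _ _; set q := Pdiv.Ring.rdivp (f * upoly a b) (constamod n).
have size_c : (size c <= n)%N.
  have := Pdiv.Ring.ltn_rmodp (f * upoly a b) (constamod n).
  by rewrite monic_neq0 // /constamod size_XnsubC.
have c_eq : c = f * upoly a b - q * constamod n.
  by rewrite [in RHS](Pdiv.RingMonic.rdivp_eq monic_constamod (f * upoly a b)); ring.
rewrite -(upoly_fst_snd f) -(upoly_fst_snd q) constamodE !upolyM upolyB in c_eq.
rewrite -(upoly_fst_snd c) in c_eq; have [c1 c2] := upoly_inj _ _ _ _ c_eq.
have gray_c : gray n c = poly_fst f * (b + 'X^n * (2%:R *: a + b))
    + poly_snd f * (a + 'X^n * a)
    - (2%:R * poly_fst q + poly_snd q) * ('X^(2 * n) - 1).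
  by rewrite gray_small // c1 c2 gray_upolyB gray_upoly_mul_generator
             gray_upoly_mul_constamod.
rewrite gray_c; symmetry; apply: rmodp_small_sub_mul; first by rewrite -polyC1 monicXnsubC.
by rewrite -gray_c -polyC1 size_XnsubC // ltnS size_gray.
Qed.

Theorem theorem5p6 (n : nat) (a b : {poly 'Z_4}) :
  (0 < n)%N -> (size a <= n)%N -> (size b <= n)%N ->
  forall v : {poly 'Z_4},
    (exists2 c : {poly R4}, constacode n a b c & v = gray n c) <->
    cycideal2 n (b + 'X^n * (2%:R *: a + b)) (a + 'X^n * a) v.
Proof.
move=> n_gt0 _ _ v; split.
  case=> c [f ->] ->; exists (poly_fst f), (poly_snd f); exact: gray_rmodp.
case=> f1 [f2 ->].
exists (Pdiv.Ring.rmodp (upoly f1 f2 * upoly a b) (constamod n)).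
  by exists (upoly f1 f2).
by rewrite gray_rmodp // poly_fst_upoly poly_snd_upoly.
Qed.
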